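(* Let $(f,\preceq)$ be a flow for a geometry $(G,I,O)$. Then there is a path cover $\mathcal P_f$ of $(G,I,O)$ such that for all vertices $v,w \in V(G)$, $v \to w$ is an arc of some path of $\mathcal P_f$ if and only if $v \in O^c$ and $w = f(v)$.
   Context: All graphs are finite, simple and undirected, with no self-loops; $v \sim w$ denotes adjacency. A geometry is a triple $(G,I,O)$ with $G$ a graph and $I,O\subseteq V(G)$; $O^c = V(G)\setminus O$, $I^c = V(G)\setminus I$. A flow for $(G,I,O)$ is a pair $(f,\preceq)$ with $f:O^c\to I^c$ a function and $\preceq$ a partial order on $V(G)$ such that for all $v\in O^c$, $w\in V(G)$: $v\sim f(v)$; $v\preceq f(v)$; and $w\sim f(v)\Rightarrow v\preceq w$. A directed path in $G$ is a sequence of distinct vertices $u_0,\dots,u_\ell$ ($\ell\ge 0$; $\ell=0$ is a trivial path) with $u_{i}\sim u_{i+1}$, whose arcs are $u_i\to u_{i+1}$. A path cover of $(G,I,O)$ is a collection $\mathcal C$ of directed paths in $G$ such that (i) every vertex of $G$ lies on exactly one path of $\mathcal C$; (ii) each path of $\mathcal C$ is either disjoint from $I$ or meets $I$ only at its initial vertex; (iii) each path of $\mathcal C$ meets $O$ only at its final vertex (in particular, its final vertex lies in $O$). *)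

From mathcomp Require Import all_boot.
Set Implicit Arguments. Unset Strict Implicit. Unset Printing Implicit Defensive.

Definition simple_graph (T : finType) (G : rel T) : Prop :=
  symmetric G /\ irreflexive G.

Definition partial_order (T : finType) (le : rel T) : Prop :=
  [/\ reflexive le, antisymmetric le & transitive le].

(* The function f : O^c -> I^c is
   represented by a total function T -> T of which only the restriction to
   O^c matters; its values on O^c are required to lie in I^c. *)
Definition is_flow (T : finType) (G : rel T) (I O : {set T})
    (f : T -> T) (le : rel T) : Prop :=
  partial_order le /\
  forall v : T, v \notin O ->
    [/\ f v \notin I, G v (f v), le v (f v) &
        forall w : T, G w (f v) -> le v w].

Definition is_dpath (T : finType) (G : rel T) (p : seq T) : bool :=
  match p with
  | [::] => false
  | x :: q => uniq p && path G x q
  end.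

Definition is_arc (T : finType) (p : seq T) (v w : T) : bool :=
  (v, w) \in zip p (behead p).

Definition is_path_cover (T : finType) (G : rel T) (I O : {set T})
    (C : seq (seq T)) : Prop :=
  [/\ (forall p, p \in C -> is_dpath G p),
      (forall x : T, count (fun p => x \in p) C = 1),
      (forall p, p \in C -> all (fun x => x \notin I) (behead p)) &
      (forall p, p \in C ->
         match p with
         | [::] => False
         | x :: q => (last x q \in O) /\ all (fun y => y \notin O) (belast x q)
         end)].

From mathcomp Require Import all_boot.
Set Implicit Arguments. Unset Strict Implicit.

(* Given a flow (f, le) for (G, I, O), the path cover P_f is made of the
   f-orbits of the vertices that are not of the form f v.  From such a
   "source" s we follow s, f s, f (f s), ... until the first vertex in O.
   - Along an orbit staying in O^c, the iterates increase for le
     (flow_iter_le); a repetition would force some x = f x by antisymmetry,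
     contradicting x ~ f x in a loopless graph.  Hence such orbit prefixes are
     duplicate-free, shorter than #|T|, and every orbit reaches O at a first
     "exit time".  This makes each orbit prefix a directed path whose inner
     vertices lie in f(O^c), a subset of I^c, and which meets O only at its end.
   - f is injective on O^c (again by antisymmetry), so two such orbits that
     meet come from the same source; and following f backwards from any
     vertex (at most #|T| steps) ends at a source, so every vertex lies on
     exactly one path.
   - The arcs of the path from s are the pairs (z, f z) with z before the exit
     time, i.e. exactly the pairs (v, f v) with v in O^c. *)

Lemma zip_traject (T : Type) (f : T -> T) x n :
  zip (traject f x n.+1) (traject f (f x) n) = [seq (z, f z) | z <- traject f x n].
Proof. by elim: n x => [|n IHn] x //; rewrite trajectS [traject f (f x) _]trajectS /= IHn. Qed.

Lemma path_traject (T : eqType) (e : rel T) (f : T -> T) x n :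
  {in traject f x n, forall z, e z (f z)} -> path e x (traject f (f x) n).
Proof.
elim: n x => [|n IHn] x //= e_step.
rewrite e_step ?mem_head //=; apply: IHn => z z_orb.
by apply: e_step; rewrite inE z_orb orbT.
Qed.

Section FlowPaths.

Variables (T : finType) (G : rel T) (I O : {set T}) (f : T -> T) (le : rel T).
Hypothesis G_irrefl : irreflexive G.
Hypothesis flowF : is_flow G I O f le.

Lemma flow_order : partial_order le.
Proof. by case: flowF. Qed.

Lemma flow_step v : v \notin O ->
  [/\ f v \notin I, G v (f v), le v (f v) & forall w, G w (f v) -> le v w].
Proof. by case: flowF => _; apply. Qed.

Definition avoids_O (x : T) (n : nat) : bool :=
  all (fun y => y \notin O) (traject f x n).

Lemma avoids_OP x n :
  reflect (forall i, i < n -> iter i f x \notin O) (avoids_O x n).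
Proof.
apply: (iffP allP) => [out i lt_in | out y /trajectP[i lt_in ->]].
  by apply: out; apply/trajectP; exists i.
exact: out.
Qed.

Lemma avoids_O_le x m n : m <= n -> avoids_O x n -> avoids_O x m.
Proof.
move=> le_mn /avoids_OP out; apply/avoids_OP => i lt_im.
exact: out (leq_trans lt_im le_mn).
Qed.

Lemma flow_iter_le x m d :
  avoids_O x (m + d) -> le (iter m f x) (iter (m + d) f x).
Proof.
have [le_refl _ le_trans] := flow_order.
elim: d => [|d IHd] out; first by rewrite addn0 le_refl.
rewrite addnS in out *; apply: (le_trans (iter (m + d) f x)).
  by apply: IHd; apply: avoids_O_le out.
by rewrite iterS; have [_ _ ->] := flow_step (avoids_OP _ _ out _ (ltnSn _)).
Qed.

Lemma flow_iter_neq x i j :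
  i < j -> avoids_O x j -> iter i f x != iter j f x.
Proof.
move=> lt_ij out; apply/eqP => eq_ij.
have [_ le_anti _] := flow_order.
have [_ G_step le_step _] := flow_step (avoids_OP _ _ out _ lt_ij).
have le_back : le (iter i.+1 f x) (iter i f x).
  by rewrite eq_ij -(subnKC lt_ij) flow_iter_le // subnKC.
have fixed : iter i f x = f (iter i f x).
  by apply: le_anti; rewrite le_step -iterS le_back.
by move: G_step; rewrite -fixed G_irrefl.
Qed.

(* f is injective on O^c: f a = f b gives a ~ f b and b ~ f a, so both
   le a b and le b a. *)
Lemma flow_injective a b : a \notin O -> b \notin O -> f a = f b -> a = b.
Proof.
move=> aO bO fab; have [_ le_anti _] := flow_order.
have [_ Ga _ le_a] := flow_step aO; have [_ Gb _ le_b] := flow_step bO.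
have le_ab : le a b by apply: le_a; rewrite fab.
have le_ba : le b a by apply: le_b; rewrite -fab.
by apply: le_anti; rewrite le_ab le_ba.
Qed.

Lemma avoids_O_uniq x n : avoids_O x n -> uniq (traject f x n.+1).
Proof.
move=> out; rewrite looping_uniq; apply/trajectP => -[i lt_in eq_in].
by move: (flow_iter_neq lt_in out); rewrite eq_in eqxx.
Qed.

Lemma avoids_O_bound x n : avoids_O x n -> n < #|T|.
Proof.
move/avoids_O_uniq/card_uniqP; rewrite size_traject => <-.
exact: max_card.
Qed.

(* The first time at which the orbit of x enters O; it exists because an
   orbit cannot avoid O for #|T| steps. *)
Definition exit_time (x : T) : nat :=
  find (fun n => iter n f x \in O) (iota 0 #|T|.+1).

Lemma exit_timeP x : iter (exit_time x) f x \in O /\ avoids_O x (exit_time x).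
Proof.
have exits : has (fun n => iter n f x \in O) (iota 0 #|T|.+1).
  apply: contraT => /hasPn never_O.
  have : avoids_O x #|T|.+1.
    by apply/avoids_OP => i lt_i; apply: never_O; rewrite mem_iota.
  by move/avoids_O_bound; rewrite ltnNge leqnSn.
have lt_exit : exit_time x < #|T|.+1.
  by rewrite -[X in _ < X](size_iota 0) -has_find.
split; first by have := nth_find 0 exits; rewrite nth_iota.
apply/avoids_OP => i lt_i; have := before_find 0 lt_i.
by rewrite nth_iota ?(ltn_trans lt_i) // => ->.
Qed.

Definition flow_path (x : T) : seq T := traject f x (exit_time x).+1.

Lemma flow_path_arcE x v w :
  is_arc (flow_path x) v w = (v \in traject f x (exit_time x)) && (w == f v).
Proof.
rewrite /is_arc /flow_path [behead _]/= zip_traject.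
by apply/mapP/andP => [[z z_orb [-> ->]] | [v_orb /eqP ->]]; [split | exists v].
Qed.

Lemma flow_path_dpath x : is_dpath G (flow_path x).
Proof.
have [_ out] := exit_timeP x.
rewrite /flow_path; have := avoids_O_uniq out; rewrite trajectS /= => -> /=.
apply: path_traject => z z_orb.
by have [] := flow_step (allP out z z_orb).
Qed.

Lemma flow_path_avoids_I x : all (fun y => y \notin I) (behead (flow_path x)).
Proof.
have [_ out] := exit_timeP x.
apply/allP => _ /trajectP[i lt_i ->]; rewrite -iterSr iterS.
by have [] := flow_step (avoids_OP _ _ out _ lt_i).
Qed.

Lemma flow_path_ends x :
  match flow_path x with
  | [::] => False
  | y :: q => (last y q \in O) /\ all (fun z => z \notin O) (belast y q)
  end.
Proof.
have [exit_O out] := exit_timeP x.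
rewrite /flow_path trajectS last_traject; split => //.
by case: (exit_time x) out => // n; rewrite trajectSr belast_rcons -trajectS.
Qed.

Definition sources : {set T} := [set y | [forall v, (v \notin O) ==> (f v != y)]].

Lemma sourcesP y : reflect (forall v, v \notin O -> f v != y) (y \in sources).
Proof.
rewrite inE; apply: (iffP forallP) => src v; first exact/implyP.
by apply/implyP; apply: src.
Qed.

(* Injectivity of f on O^c: orbits of distinct sources never meet before
   their exit times. *)
Lemma source_orbit_unique s s' i j :
  s \in sources -> s' \in sources -> i <= exit_time s -> j <= exit_time s' ->
  iter i f s = iter j f s' -> s = s'.
Proof.
elim: i j s s' => [|i IHi] [|j] s s' src_s src_s' le_i le_j //=.
- move=> eq_s; have jO := avoids_OP _ _ (exit_timeP s').2 _ le_j.
  by have /sourcesP/(_ _ jO) := src_s; rewrite eq_s eqxx.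
- move=> eq_s; have iO := avoids_OP _ _ (exit_timeP s).2 _ le_i.
  by have /sourcesP/(_ _ iO) := src_s'; rewrite -eq_s eqxx.
- move=> /flow_injective eq_ij; apply: IHi src_s src_s' _ _ (eq_ij _ _).
  all: by [apply: ltnW | apply: (avoids_OP _ _ (exit_timeP _).2)].
Qed.

(* Every vertex lies on the orbit prefix of some source: take a longest
   backward f-chain in O^c ending at y; its first vertex is a source. *)
Lemma source_orbit_exists y :
  exists2 s, s \in sources & exists2 i, i <= exit_time s & y = iter i f s.
Proof.
pose reach n := [exists s, (iter n f s == y) && avoids_O s n].
have reach0 : exists n, reach n.
  by exists 0; apply/existsP; exists y; rewrite eqxx.
have reach_bound n : reach n -> n <= #|T|.
  by case/existsP => s /andP[_ /avoids_O_bound /ltnW].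
case: (ex_maxnP reach0 reach_bound) => n /existsP[s /andP[/eqP eq_y out]] n_max.
have src_s : s \in sources.
  apply/sourcesP => v vO; apply/eqP => fv_s.
  suff /n_max : reach n.+1 by rewrite ltnn.
  apply/existsP; exists v; rewrite iterSr fv_s eq_y eqxx /=.
  by rewrite /avoids_O trajectS /= vO fv_s.
exists s => //; exists n => //; rewrite leqNgt; apply/negP => lt_exit.
by have := avoids_OP _ _ out _ lt_exit; rewrite (exit_timeP s).1.
Qed.

Definition flow_cover : seq (seq T) := [seq flow_path s | s <- enum sources].

Lemma flow_cover_partition y : count (fun p => y \in p) flow_cover = 1.
Proof.
have [s0 src_s0 [j le_j eq_y]] := source_orbit_exists y.
rewrite count_map (@eq_in_count _ _ (pred1 s0)).
  by rewrite count_uniq_mem ?enum_uniq // mem_enum src_s0.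
move=> s; rewrite mem_enum => src_s /=; apply/trajectP/eqP => [[i le_i eq_i] | ->].
  by apply: (source_orbit_unique src_s src_s0 le_i le_j); rewrite -eq_i -eq_y.
by exists j.
Qed.

Lemma flow_cover_arcP v w :
  (exists2 p, p \in flow_cover & is_arc p v w) <-> (v \notin O /\ w = f v).
Proof.
split => [[_ /mapP[s _ ->]] | [vO ->]].
  rewrite flow_path_arcE => /andP[/trajectP[i lt_i ->] /eqP ->]; split => //.
  exact: (avoids_OP _ _ (exit_timeP s).2 _ lt_i).
have [s src_s [i le_i eq_v]] := source_orbit_exists v.
exists (flow_path s); first by apply: map_f; rewrite mem_enum.
rewrite flow_path_arcE eqxx andbT; apply/trajectP; exists i => //.
rewrite ltn_neqAle le_i andbT; apply: contraNneq vO => eq_i.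
by rewrite eq_v eq_i (exit_timeP s).1.
Qed.

End FlowPaths.

Theorem mainTheorem2 (T : finType) (G : rel T) (I O : {set T})
    (f : T -> T) (le : rel T) :
  simple_graph G ->
  is_flow G I O f le ->
  exists C : seq (seq T),
    is_path_cover G I O C /\
    forall v w : T,
      (exists2 p, p \in C & is_arc p v w) <-> (v \notin O /\ w = f v).
Proof.
move=> [_ G_irrefl] flowF.
exists (flow_cover O f); split; last exact: flow_cover_arcP flowF.
split.
- by move=> _ /mapP[s _ ->]; apply: flow_path_dpath G_irrefl flowF s.
- exact: flow_cover_partition G_irrefl flowF.
- by move=> _ /mapP[s _ ->]; apply: flow_path_avoids_I G_irrefl flowF s.
- by move=> _ /mapP[s _ ->]; apply: flow_path_ends G_irrefl flowF s.
Qed.
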